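(* Let $m>1$ be odd, let $\varphi:\mathbb{Z}_{2m}\to\{\pm1\}$ be a binary sequence, let $\phi$ be the binary $(2,m)$-array obtained from $\varphi$ by the rule below, and let $f(k)=\frac{1-\mathrm{i}}{2}(\phi(0,k)+\mathrm{i}\phi(1,k))$ for $k\in\mathbb{Z}_m$. Then $f$ is an OQS if and only if $\varphi$ is a GOBS of length $2m$. The rule ($a\in\{0,1\}$, $k$ an integer in $\{0,\ldots,m-1\}$, arguments of $\varphi$ modulo $2m$): if $m\equiv1\pmod 4$, $\phi(a,k)$ equals $\varphi(k+am)$, $(-1)^{1-a}\varphi(k+(1-a)m)$, $-\varphi(k+am)$, $(-1)^a\varphi(k+(1-a)m)$ according as $k\equiv 0,1,2,3\pmod 4$; if $m\equiv 3\pmod 4$, $\phi(a,k)$ equals $(-1)^a\varphi(k+am)$, $\varphi(k+(1-a)m)$, $(-1)^{1-a}\varphi(k+am)$, $-\varphi(k+(1-a)m)$ according as $k\equiv 0,1,2,3\pmod 4$.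
   Context: $\mathrm{i}=\sqrt{-1}$. For a finite abelian group $A$ and $\psi:A\to\mathbb{C}$, $R_\psi(x)=\sum_{b\in A}\psi(b)\overline{\psi(x+b)}$. A quaternary sequence $f:\mathbb{Z}_m\to\{\pm1,\pm\mathrm{i}\}$, $m$ odd, is an OQS if $|R_f(w)|=1$ for all $1\le w\le m-1$. For a binary sequence $\varphi:\mathbb{Z}_{2m}\to\{\pm1\}$, its expansion is $\varphi':\mathbb{Z}_{4m}\to\{\pm1\}$ with $\varphi'(x)=\varphi(x\bmod 2m)$ for $x\in\{0,\ldots,2m-1\}$ and $\varphi'(x)=-\varphi(x\bmod 2m)$ for $x\in\{2m,\ldots,4m-1\}$. $\varphi$ is a GOBS if $R_{\varphi'}(x)\in\{0,4,-4\}$ for all $x\in\mathbb{Z}_{4m}\setminus\{0,2m\}$ and exactly $2m$ elements $x\in\mathbb{Z}_{4m}$ satisfy $R_{\varphi'}(x)=0$. *)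

From HB Require Import structures.
From mathcomp Require Import all_boot all_order all_algebra all_field.
Set Implicit Arguments. Unset Strict Implicit. Unset Printing Implicit Defensive.
Import Order.TTheory GRing.Theory Num.Theory.
Local Open Scope ring_scope.

(* A sequence on Z_n is a function psi : nat -> algC read at indices 0..n-1;
   arguments are reduced modulo n. *)

Definition Rcorr (n : nat) (psi : nat -> algC) (x : nat) : algC :=
  \sum_(b < n) psi b * (psi ((x + b) %% n)%N)^*.

Definition quaternary (m : nat) (f : nat -> algC) : Prop :=
  forall k, (k < m)%N -> f k \in [:: 1; -1; 'i; - 'i].

Definition OQS (m : nat) (f : nat -> algC) : Prop :=
  quaternary m f /\ forall w, (0 < w < m)%N -> `|Rcorr m f w| = 1.

Definition expansion (m : nat) (varphi : nat -> algC) (x : nat) : algC :=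
  if (x %% (4 * m) < 2 * m)%N then varphi (x %% (2 * m))%N
  else - varphi (x %% (2 * m))%N.

Definition GOBS (m : nat) (varphi : nat -> algC) : Prop :=
  (forall x, (x < 4 * m)%N -> x != 0%N -> x != (2 * m)%N ->
      Rcorr (4 * m) (expansion m varphi) x \in [:: 0; 4; -4])
  /\ #|[set x : 'I_(4 * m) | Rcorr (4 * m) (expansion m varphi) x == 0]| = (2 * m)%N.

Definition arr (m : nat) (varphi : nat -> algC) (a k : nat) : algC :=
  let s := varphi ((k + a * m) %% (2 * m))%N in
  let t := varphi ((k + (1 - a) * m) %% (2 * m))%N in
  if (m %% 4 == 1)%N then
    match (k %% 4)%N with
    | 0 => s | 1 => (-1) ^+ (1 - a) * t | 2 => - s | _ => (-1) ^+ a * t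
    end
  else
    match (k %% 4)%N with
    | 0 => (-1) ^+ a * s | 1 => t | 2 => (-1) ^+ (1 - a) * s | _ => - t
    end.

Definition fseq (m : nat) (varphi : nat -> algC) (k : nat) : algC :=
  (1 - 'i) / 2 * (arr m varphi 0 k + 'i * arr m varphi 1 k).

(* Since 4 and m are coprime, the Chinese remainder theorem identifies Z_4m
   with Z_4 x Z_m.  In these coordinates the expansion of varphi is the
   interleaving y |-> Re(i^y (phi(0,k) - i phi(1,k))), k = y mod m, of the two
   rows of the array, so summing over the Z_4 coordinate gives
   R_phi'(x) = 2 Re(i^x (C - i D)), where C = R_phi0 + R_phi1 and D is the
   antisymmetrised cross-correlation of the rows, evaluated at x mod m; on the
   other hand R_f(w) = (C(w) - i D(w)) / 2.  Each of the m terms of C + D is +-2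
   and m is odd, so C + D = 2 (mod 4).  Hence |R_f(w)| = 1, i.e. C^2 + D^2 = 4,
   holds iff C, D are in {0, 2, -2}, which is the GOBS value condition; and then
   exactly one of C(w), D(w) vanishes, which gives exactly 2m zeros of R_phi'. *)

From HB Require Import structures.
From mathcomp Require Import all_boot all_order all_algebra all_field.
From mathcomp Require Import zify ring.
Import Order.TTheory GRing.Theory Num.Theory.
Set Implicit Arguments. Unset Strict Implicit. Unset Printing Implicit Defensive.
Local Open Scope ring_scope.

Section ChineseReindex.

Variables p q : nat.
Hypothesis co_pq : coprime p q.

Definition crt (u k : nat) : nat := (chinese p q u k %% (p * q))%N.

Lemma crt_lt u k : (u < p)%N -> (k < q)%N -> (crt u k < p * q)%N.
Proof.
by move=> lt_up lt_kq; rewrite ltn_mod muln_gt0 (leq_ltn_trans _ lt_up) ?(leq_ltn_trans _ lt_kq).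
Qed.

Lemma crt_modl u k : (u < p)%N -> (crt u k %% p = u)%N.
Proof.
by move=> lt_up; rewrite modn_dvdm ?dvdn_mulr // chinese_modl // modn_small.
Qed.

Lemma crt_modr u k : (k < q)%N -> (crt u k %% q = k)%N.
Proof.
by move=> lt_kq; rewrite modn_dvdm ?dvdn_mull // chinese_modr // modn_small.
Qed.

Lemma big_ord_crt (R : Type) (idx : R) (op : Monoid.com_law idx) (F : nat -> R) :
  \big[op/idx]_(b < p * q) F b = \big[op/idx]_(u < p) \big[op/idx]_(k < q) F (crt u k).
Proof.
pose h (i : 'I_p * 'I_q) := Ordinal (crt_lt (ltn_ord i.1) (ltn_ord i.2)).
have h_inj : injective h.
  move=> [u1 k1] [u2 k2] /(congr1 val) /= eq_crt.
  congr pair; apply: val_inj => /=.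
    by rewrite -(crt_modl k1 (ltn_ord u1)) -(crt_modl k2 (ltn_ord u2)) eq_crt.
  by rewrite -(crt_modr u1 (ltn_ord k1)) -(crt_modr u2 (ltn_ord k2)) eq_crt.
have h_bij : bijective h by apply: inj_card_bij => //; rewrite card_prod !card_ord.
by rewrite pair_big (reindex h) //; apply: onW_bij.
Qed.

End ChineseReindex.

Lemma coprime4_odd n : odd n -> coprime 4 n.
Proof. by move=> odd_n; rewrite (_ : 4 = 2 ^ 2)%N // coprimeXl // coprime2n. Qed.

Lemma odd_of_dvd n x : odd n -> (x < 4 * n)%N -> (n %| x)%N ->
  x != 0%N -> x != (2 * n)%N -> odd x.
Proof.
move=> odd_n + /dvdnP[q x_E]; rewrite {}x_E ltn_mul2r => /andP[_ lt_q4].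
by case: q lt_q4 => [|[|[|[|q]]]] //= _; rewrite ?mul0n ?mul1n ?eqxx // oddM odd_n.
Qed.

(* [qturn u c d] is the real part of i^u (c - i d). *)
Definition qturn (R : zmodType) (u : nat) (c d : R) : R :=
  match (u %% 4)%N with 0 => c | 1 => d | 2 => - c | _ => - d end.

Lemma qturn_mod (R : zmodType) u (c d : R) : qturn (u %% 4) c d = qturn u c d.
Proof. by rewrite /qturn modn_mod. Qed.

Lemma qturn_intr (R : pzRingType) u (c d : int) :
  (qturn u c d)%:~R = qturn u (c%:~R : R) d%:~R.
Proof. by rewrite /qturn; case: (u %% 4)%N => [|[|[|?]]]; rewrite ?intrN. Qed.

Lemma qturn_sum (R : zmodType) (I : Type) (r : seq I) (P : pred I) u (F G : I -> R) :
  \sum_(i <- r | P i) qturn u (F i) (G i) =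
  qturn u (\sum_(i <- r | P i) F i) (\sum_(i <- r | P i) G i).
Proof. by rewrite /qturn; case: (u %% 4)%N => [|[|[|?]]]; rewrite ?sumrN. Qed.

Lemma qturn_odd_eq0 (R : zmodType) u (c : R) : odd u -> qturn u c 0 = 0.
Proof.
move=> odd_u; have : odd (u %% 4) by rewrite odd_mod.
have : (u %% 4 < 4)%N by rewrite ltn_mod.
by rewrite /qturn; case: (u %% 4)%N => [|[|[|[|?]]]] //= _ _; rewrite oppr0.
Qed.

Lemma sum_qturn_mul (R : comPzRingType) x (a b c d : R) :
  \sum_(u < 4) qturn u a b * qturn (x + u) c d = 2 * qturn x (a * c + b * d) (a * d - b * c).
Proof.
rewrite !big_ord_recl big_ord0 /= /qturn /bump /= -[in RHS](modn_mod x).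
have : (x %% 4 < 4)%N by rewrite ltn_mod.
rewrite -!(modnDml x); move: (x %% 4)%N => s.
by case: s => [|[|[|[|?]]]] // _ /=; ring.
Qed.

Lemma qturn_pm2 u (c d : int) :
  c \in [:: 0; 2; -2] -> d \in [:: 0; 2; -2] -> qturn u c d \in [:: 0; 2; -2].
Proof. by rewrite /qturn !inE; case: (u %% 4)%N => [|[|[|?]]] hc hd //; lia. Qed.

Lemma sum_qturn_eq0 (c d : int) :
  (c == 0) != (d == 0) -> (\sum_(u < 4) (qturn u c d == 0))%N = 2.
Proof.
by rewrite !big_ord_recl big_ord0 /qturn /= !oppr_eq0; case: (c == 0); case: (d == 0).
Qed.

Lemma sum_pm n (d : int) (t : nat -> int) :
  (forall k, (k < n)%N -> t k = d \/ t k = - d) ->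
  exists c, \sum_(k < n) t k = n%:Z * d - 2 * c * d.
Proof.
elim: n => [|n IHn] t_pm; first by exists 0; rewrite big_ord0 mul0r subr0.
have [k lt_kn|c sum_t] := IHn; first exact/t_pm/ltnW.
rewrite big_ord_recr /= sum_t.
by case: (t_pm n (ltnSn n)) => ->; [exists c | exists (c + 1)]; rewrite intS; ring.
Qed.

Lemma pm1_cross (a b c d : int) :
  a = 1 \/ a = -1 -> b = 1 \/ b = -1 -> c = 1 \/ c = -1 -> d = 1 \/ d = -1 ->
  a * c + b * d + (a * d - b * c) = 2 \/ a * c + b * d + (a * d - b * c) = - 2.
Proof. by do 4![case=> ->]; auto. Qed.

Lemma sqr_sum4 (c d : int) :
  c * c + d * d = 4 -> c \in [:: 0; 2; -2] /\ d \in [:: 0; 2; -2].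
Proof.
have sq_bound (x y : int) : x * x + y * y = 4 -> x = -2 \/ x = -1 \/ x = 0 \/ x = 1 \/ x = 2.
  move=> sq; have : x * x <= 4 by nia.
  nia.
rewrite !inE => sq; have sq' : d * d + c * c = 4 by rewrite addrC.
have [bc bd] := (sq_bound _ _ sq, sq_bound _ _ sq'); move: sq {sq'}.
by case: bc => [->|[->|[->|[->|->]]]]; case: bd => [->|[->|[->|[->|->]]]]; lia.
Qed.

Lemma sqr_sum4_iff (c d k : int) : c + d = 4 * k + 2 ->
  c * c + d * d = 4 <-> c \in [:: 0; 2; -2] /\ d \in [:: 0; 2; -2].
Proof.
move=> c_d_2mod4; split; first exact: sqr_sum4.
by rewrite !inE => -[/or3P[]/eqP c_E /or3P[]/eqP d_E]; move: c_d_2mod4; rewrite c_E d_E; lia.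
Qed.

Lemma sqr_sum4_xor (c d : int) : c * c + d * d = 4 -> (c == 0) != (d == 0).
Proof.
move=> sq; have [] := sqr_sum4 sq; rewrite !inE => /or3P[]/eqP c_E /or3P[]/eqP d_E;
  by move: sq; rewrite c_E d_E; lia.
Qed.

Lemma qmix_rect (C : numClosedFieldType) (x y : C) :
  (1 - 'i) / 2 * (x + 'i * y) = (x + y) / 2 + 'i * ((y - x) / 2).
Proof.
transitivity ((x + y) / 2 + 'i * ((y - x) / 2) - ('i ^+ 2 + 1) * y / 2); first by field.
by rewrite sqrCi addNr !mul0r subr0.
Qed.

Lemma qmix_mul_conj (C : numClosedFieldType) (x0 x1 y0 y1 : C) :
  x0 \is Num.real -> x1 \is Num.real -> y0 \is Num.real -> y1 \is Num.real ->
  (1 - 'i) / 2 * (x0 + 'i * x1) * ((1 - 'i) / 2 * (y0 + 'i * y1))^*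
  = ((x0 * y0 + x1 * y1) - 'i * (x0 * y1 - x1 * y0)) / 2.
Proof.
move=> x0R x1R y0R y1R.
have half_real (z : C) : z \is Num.real -> z / 2 \is Num.real.
  by move=> zR; rewrite rpredM ?rpredV ?realn.
rewrite !qmix_rect conjC_rect ?half_real ?rpredD ?rpredB ?rpredN //.
transitivity ((x0 * y0 + x1 * y1) / 2 - 'i * ((x0 * y1 - x1 * y0) / 2)
              - ('i ^+ 2 + 1) * (x1 - x0) * (y1 - y0) / 4); first by field.
by rewrite sqrCi addNr !mul0r subr0; field.
Qed.

Lemma qmix_quaternary (a b : int) : a = 1 \/ a = -1 -> b = 1 \/ b = -1 ->
  (1 - 'i) / 2 * (a%:~R + 'i * b%:~R) \in ([:: 1; -1; 'i; - 'i] : seq algC).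
Proof.
have half2 : (1 + 1) / 2 = 1 :> algC by rewrite divff // (pnatr_eq0 _ 2).
rewrite qmix_rect !inE => [[]-> []->]; rewrite ?opprK ?subrr ?addNr -?opprD ?mulNr half2;
  by rewrite ?mul0r ?mulr0 ?mulr1 ?mulrN1 ?addr0 ?add0r ?eqxx ?orbT.
Qed.

Lemma normC_half_rect (c d : int) :
  `|((c%:~R - 'i * d%:~R) / 2 : algC)| = 1 <-> c * c + d * d = 4.
Proof.
have norm2 : `|((c%:~R - 'i * d%:~R) / 2 : algC)| ^+ 2 = (c * c + d * d)%:~R / 4.
  rewrite normrM normfV exprMn -mulrN -intrN normC2_rect ?realz // normr_nat exprVn.
  by rewrite intrD !intrM intrN !expr2 mulrNN -natrM.
have four : (4 : algC) = (4 : int)%:~R by [].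
split=> [norm1 | sq4].
  apply: (@intr_inj algC); rewrite -four; apply: divr1_eq.
  by rewrite -norm2 norm1 expr1n.
by apply/eqP; rewrite -sqrp_eq1 ?normr_ge0 // norm2 sq4 -four divff // pnatr_eq0.
Qed.

Lemma intr_double_mem (z : int) :
  ((2 * z)%:~R \in ([:: 0; 4; -4] : seq algC)) = (z \in [:: 0; 2; -2]).
Proof.
by rewrite !inE intr_eq0 -[4 : algC]/((4 : int)%:~R) -intrN !eqr_int; lia.
Qed.

Definition icorr (n : nat) (g h : nat -> int) (w : nat) : int :=
  \sum_(k < n) g k * h ((w + k) %% n)%N.

Lemma icorr_mod n g h w : icorr n g h (w %% n) = icorr n g h w.
Proof. by apply: eq_bigr => k _; rewrite modnDml. Qed.

Lemma icorr_self0 n (a : nat -> int) : (forall k, (k < n)%N -> a k = 1 \/ a k = -1) ->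
  icorr n a a 0 = n%:Z.
Proof.
move=> a_pm1; rewrite /icorr (eq_bigr (fun _ => 1)) ?sumr_const ?card_ord ?natz //.
by move=> k _; rewrite add0n modn_small //; case: (a_pm1 k (ltn_ord k)) => ->.
Qed.

Lemma Rcorr_intr n (g : nat -> int) w :
  Rcorr n (fun y => (g y)%:~R) w = (icorr n g g w)%:~R.
Proof.
by rewrite /Rcorr /icorr rmorph_sum; apply: eq_bigr => k _; rewrite rmorphM /= rmorph_int.
Qed.

Lemma eq_Rcorr n (f g : nat -> algC) : f =1 g -> Rcorr n f =1 Rcorr n g.
Proof. by move=> eq_fg w; apply: eq_bigr => k _; rewrite !eq_fg. Qed.

Section PairCorrelation.

Variables (n : nat) (a0 a1 : nat -> int).

Definition corr_sum w := icorr n a0 a0 w + icorr n a1 a1 w.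
Definition xcorr_diff w := icorr n a0 a1 w - icorr n a1 a0 w.
Definition corr_turn x := qturn x (corr_sum x) (xcorr_diff x).

Lemma corr_sum_mod w : corr_sum (w %% n) = corr_sum w.
Proof. by rewrite /corr_sum !icorr_mod. Qed.

Lemma xcorr_diff_mod w : xcorr_diff (w %% n) = xcorr_diff w.
Proof. by rewrite /xcorr_diff !icorr_mod. Qed.

Definition qmix k : algC := (1 - 'i) / 2 * ((a0 k)%:~R + 'i * (a1 k)%:~R).

Lemma Rcorr_qmix w :
  Rcorr n qmix w = ((corr_sum w)%:~R - 'i * (xcorr_diff w)%:~R) / 2.
Proof.
rewrite /Rcorr /corr_sum /xcorr_diff /icorr -sumrB -big_split /= !rmorph_sum.
rewrite mulr_sumr -sumrB mulr_suml; apply: eq_bigr => k _.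
by rewrite qmix_mul_conj ?realz // !(rmorphD, rmorphN, rmorphM).
Qed.

Definition interleave y := qturn y (a0 (y %% n)%N) (a1 (y %% n)%N).

Hypothesis odd_n : odd n.

Lemma interleave_add_crt x u k : (u < 4)%N -> (k < n)%N ->
  interleave ((x + crt 4 n u k) %% (4 * n)) =
  qturn (x + u) (a0 ((x + k) %% n)) (a1 ((x + k) %% n)).
Proof.
move=> lt_u4 lt_kn; have co4n := coprime4_odd odd_n.
have dvd4 : (4 %| 4 * n)%N := dvdn_mulr n (dvdnn 4).
have dvdn : (n %| 4 * n)%N := dvdn_mull 4 (dvdnn n).
rewrite /interleave -qturn_mod (modn_dvdm _ dvd4) (modn_dvdm _ dvdn).
by rewrite -modnDmr crt_modl // -[((x + _) %% n)%N]modnDmr crt_modr // qturn_mod.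
Qed.

Lemma interleave_crt u k : (u < 4)%N -> (k < n)%N ->
  interleave (crt 4 n u k) = qturn u (a0 k) (a1 k).
Proof.
move=> lt_u4 lt_kn; have := interleave_add_crt 0 lt_u4 lt_kn.
by rewrite !add0n /crt modn_mod (modn_small lt_kn).
Qed.

Lemma icorr_interleave x : icorr (4 * n) interleave interleave x = 2 * corr_turn x.
Proof.
rewrite /icorr (big_ord_crt (coprime4_odd odd_n) _
  (fun b => interleave b * interleave ((x + b) %% (4 * n)))) exchange_big /=.
rewrite /corr_turn /corr_sum /xcorr_diff /icorr -sumrB -big_split -qturn_sum mulr_sumr.
apply: eq_bigr => k _; rewrite -sum_qturn_mul; apply: eq_bigr => u _.
by rewrite interleave_crt // interleave_add_crt.
Qed.

Lemma corr_turn_crt u k : (u < 4)%N -> (k < n)%N ->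
  corr_turn (crt 4 n u k) = qturn u (corr_sum k) (xcorr_diff k).
Proof.
move=> lt_u4 lt_kn; have co4n := coprime4_odd odd_n.
by rewrite /corr_turn -qturn_mod -corr_sum_mod -xcorr_diff_mod crt_modl // crt_modr.
Qed.

Hypothesis a0_pm1 : forall k, (k < n)%N -> a0 k = 1 \/ a0 k = -1.
Hypothesis a1_pm1 : forall k, (k < n)%N -> a1 k = 1 \/ a1 k = -1.

Lemma corr_sum0 : corr_sum 0 = 2 * n%:Z.
Proof. by rewrite /corr_sum !icorr_self0 //; ring. Qed.

Lemma xcorr_diff0 : xcorr_diff 0 = 0.
Proof.
rewrite /xcorr_diff /icorr -sumrB big1 // => k _.
by rewrite add0n modn_small // mulrC subrr.
Qed.

Lemma corr_parity w : exists c, corr_sum w + xcorr_diff w = 4 * c + 2.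
Proof.
pose j k := ((w + k) %% n)%N.
have lt_jn k : (k < n)%N -> (j k < n)%N.
  by move=> lt_kn; rewrite ltn_mod (leq_ltn_trans _ lt_kn).
have [k lt_kn|c sum_eq] := @sum_pm n 2
    (fun k => a0 k * a0 (j k) + a1 k * a1 (j k) + (a0 k * a1 (j k) - a1 k * a0 (j k))).
  exact: pm1_cross (a0_pm1 lt_kn) (a1_pm1 lt_kn) (a0_pm1 (lt_jn k lt_kn)) (a1_pm1 (lt_jn k lt_kn)).
exists (n./2%:Z - c); rewrite /corr_sum /xcorr_diff /icorr -sumrB -!big_split /= sum_eq.
by rewrite -[in LHS](odd_double_half n) odd_n -muln2 intS PoszM; ring.
Qed.

Lemma corr_turn_pm2_iff :
  (forall x, (x < 4 * n)%N -> x != 0%N -> x != (2 * n)%N -> corr_turn x \in [:: 0; 2; -2]) <->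
  (forall w, (0 < w < n)%N -> corr_sum w * corr_sum w + xcorr_diff w * xcorr_diff w = 4).
Proof.
have co4n := coprime4_odd odd_n.
split=> [pm2 w /andP[w_gt0 lt_wn] | sq4 x lt_x x_neq0 x_neq2n].
  have [c c_d_2mod4] := corr_parity w; apply/(sqr_sum4_iff c_d_2mod4).
  have crt_pm2 u : (u < 4)%N -> qturn u (corr_sum w) (xcorr_diff w) \in [:: 0; 2; -2].
    move=> lt_u4; rewrite -corr_turn_crt //; apply: pm2; first exact: crt_lt.
      by apply: contraTneq w_gt0 => crt0; rewrite -(crt_modr co4n u lt_wn) crt0 mod0n.
    by apply: contraTneq w_gt0 => crt2n; rewrite -(crt_modr co4n u lt_wn) crt2n modnMl.
  by split; [apply: (crt_pm2 0%N) | apply: (crt_pm2 1%N)].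
rewrite /corr_turn -corr_sum_mod -xcorr_diff_mod.
case: (posnP (x %% n)) => [x_modn0 | x_modn_gt0].
  rewrite x_modn0 xcorr_diff0 qturn_odd_eq0 ?inE ?eqxx //.
  by apply: odd_of_dvd x_neq0 x_neq2n; rewrite // /dvdn x_modn0.
have [] := sqr_sum4 (sq4 (x %% n)%N _); last exact: qturn_pm2.
by rewrite x_modn_gt0 ltn_pmod ?odd_gt0.
Qed.

Lemma card_corr_turn_eq0 :
  (forall w, (0 < w < n)%N -> corr_sum w * corr_sum w + xcorr_diff w * xcorr_diff w = 4) ->
  #|[set x : 'I_(4 * n) | corr_turn x == 0]| = (2 * n)%N.
Proof.
move=> sq4; rewrite -sum1dep_card big_mkcond.
rewrite (big_ord_crt (coprime4_odd odd_n) _ (fun x => nat_of_bool (corr_turn x == 0))) exchange_big.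
transitivity (\sum_(k < n) 2)%N; last by rewrite sum_nat_const card_ord mulnC.
apply: eq_bigr => k _; rewrite -[RHS](sum_qturn_eq0 (c := corr_sum k) (d := xcorr_diff k)).
  by apply: eq_bigr => u _; rewrite corr_turn_crt.
case: (posnP k) => [-> | k_gt0].
  by rewrite corr_sum0 xcorr_diff0 eqxx mulf_eq0 !eqz_nat !eqn0Ngt (odd_gt0 odd_n).
by apply: sqr_sum4_xor; apply: sq4; rewrite k_gt0 ltn_ord.
Qed.

End PairCorrelation.

Section Expansion.

Variables (m : nat) (vp : nat -> algC).
Hypothesis odd_m : odd m.
Let m_gt0 : (0 < m)%N := odd_gt0 odd_m.

Lemma expansion_qm q k : (q < 4)%N -> (k < m)%N ->
  expansion m vp (q * m + k) = qturn q (vp k) (vp (k + m)).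
Proof.
move=> lt_q4 lt_km.
have lt_k2m : (k < 2 * m)%N by rewrite (leq_trans lt_km) ?leq_pmull.
have lt_km2m : (k + m < 2 * m)%N by rewrite mul2n -addnn ltn_add2r.
rewrite /expansion /qturn (modn_small (_ : q * m + k < 4 * m)%N); last by nia.
case: q lt_q4 => [|[|[|[|q]]]] // _ /=.
- by rewrite add0n lt_k2m (modn_small lt_k2m).
- by rewrite mul1n addnC lt_km2m (modn_small lt_km2m).
- by rewrite ltnNge leq_addr modnDl (modn_small lt_k2m).
- by rewrite mulSn -addnA addnCA modnDl [(m + k)%N]addnC (modn_small lt_km2m) ltnNge leq_addr.
Qed.

Lemma qturn_arr q k : (q < 4)%N -> (k < m)%N ->
  qturn (q * m + k) (arr m vp 0 k) (arr m vp 1 k) = qturn q (vp k) (vp (k + m)).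
Proof.
move=> lt_q4 lt_km.
have lt_k2m : (k < 2 * m)%N by rewrite (leq_trans lt_km) ?leq_pmull.
have lt_km2m : (k + m < 2 * m)%N by rewrite mul2n -addnn ltn_add2r.
have m4 : (m %% 4 = 1 \/ m %% 4 = 3)%N.
  have : (m %% 4 < 4)%N by rewrite ltn_mod.
  have : odd (m %% 4) by rewrite odd_mod.
  by case: (m %% 4)%N => [|[|[|[|]]]]; auto.
have e4 : ((q * m + k) %% 4 = (q * (m %% 4) + k %% 4) %% 4)%N.
  by rewrite [in RHS]modnDmr -[in RHS]modnDml modnMmr modnDml.
have lt_k4 : (k %% 4 < 4)%N by rewrite ltn_mod.
rewrite -qturn_mod e4 /qturn /arr !mul0n !mul1n addn0 !(modn_small lt_k2m) !(modn_small lt_km2m).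
move: (k %% 4)%N lt_k4 {e4} => K lt_K4.
case: q lt_q4 => [|[|[|[|q]]]] // _; case: m4 => ->;
  by case: K lt_K4 => [|[|[|[|K]]]] //= _; rewrite ?expr0 ?expr1 ?mul1r ?mulN1r ?opprK.
Qed.

Lemma expansion_qturn y :
  expansion m vp y = qturn y (arr m vp 0 (y %% m)) (arr m vp 1 (y %% m)).
Proof.
have dvd2 : (2 * m %| 4 * m)%N := dvdn_mul (dvdn_mulr 2 (dvdnn 2)) (dvdnn m).
have dvd4 : (4 %| 4 * m)%N := dvdn_mulr m (dvdnn 4).
have dvdm : (m %| 4 * m)%N := dvdn_mull 4 (dvdnn m).
rewrite -qturn_mod -(modn_dvdm y dvd4) -(modn_dvdm y dvdm) qturn_mod.
have -> : expansion m vp y = expansion m vp (y %% (4 * m)).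
  by rewrite /expansion modn_mod (modn_dvdm _ dvd2).
have : (y %% (4 * m) < 4 * m)%N by rewrite ltn_pmod ?muln_gt0 ?m_gt0.
move: (y %% (4 * m))%N => r lt_r; rewrite (divn_eq r m) modnMDl modn_mod.
have lt_q4 : (r %/ m < 4)%N by rewrite ltn_divLR.
have lt_km : (r %% m < m)%N by rewrite ltn_pmod.
by rewrite expansion_qm // qturn_arr.
Qed.

Lemma arr_pm1 a k : (forall x, (x < 2 * m)%N -> vp x = 1 \/ vp x = -1) ->
  arr m vp a k = 1 \/ arr m vp a k = -1.
Proof.
move=> vp_pm1; have vp_mod i : vp (i %% (2 * m))%N = 1 \/ vp (i %% (2 * m))%N = -1.
  by apply: vp_pm1; rewrite ltn_pmod ?muln_gt0 ?m_gt0.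
have pm1_sign e (z : algC) : z = 1 \/ z = -1 -> (-1) ^+ e * z = 1 \/ (-1) ^+ e * z = -1.
  by rewrite -signr_odd; case: (odd e) => [[]->|[]->]; rewrite ?mulN1r ?mul1r ?opprK; auto.
have pm1_opp (z : algC) : z = 1 \/ z = -1 -> - z = 1 \/ - z = -1.
  by case=> ->; rewrite ?opprK; auto.
by rewrite /arr; case: ifP => _; case: (k %% 4)%N => [|[|[|?]]]; auto.
Qed.

End Expansion.

Theorem corollary1 (m : nat) (varphi : nat -> algC) :
  odd m -> (1 < m)%N ->
  (forall x, (x < 2 * m)%N -> varphi x = 1 \/ varphi x = -1) ->
  (OQS m (fseq m varphi) <-> GOBS m varphi).
Proof.
move=> odd_m _ vp_pm1.
pose a0 k := sgz (arr m varphi 0 k); pose a1 k := sgz (arr m varphi 1 k).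
have arrE a k : arr m varphi a k = (sgz (arr m varphi a k))%:~R.
  by case: (arr_pm1 odd_m a k vp_pm1) => ->; rewrite ?sgz1 ?sgzN1.
have a_pm1 a k : sgz (arr m varphi a k) = 1 \/ sgz (arr m varphi a k) = -1.
  by case: (arr_pm1 odd_m a k vp_pm1) => ->; rewrite ?sgz1 ?sgzN1; auto.
have RfE w : Rcorr m (fseq m varphi) w =
    ((corr_sum m a0 a1 w)%:~R - 'i * (xcorr_diff m a0 a1 w)%:~R) / 2.
  by rewrite -Rcorr_qmix; apply: eq_Rcorr => k; rewrite /fseq /qmix -!arrE.
have ReE x : Rcorr (4 * m) (expansion m varphi) x = (2 * corr_turn m a0 a1 x)%:~R.
  rewrite -icorr_interleave // -Rcorr_intr; apply: eq_Rcorr => y.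
  by rewrite expansion_qturn // qturn_intr -!arrE.
have a0_pm1 k (_ : (k < m)%N) := a_pm1 0%N k; have a1_pm1 k (_ : (k < m)%N) := a_pm1 1%N k.
have pm2_iff := corr_turn_pm2_iff odd_m a0_pm1 a1_pm1.
have card_eq0 := card_corr_turn_eq0 odd_m a0_pm1 a1_pm1.
have sq4_iff w : `|Rcorr m (fseq m varphi) w| = 1 <->
    corr_sum m a0 a1 w * corr_sum m a0 a1 w + xcorr_diff m a0 a1 w * xcorr_diff m a0 a1 w = 4.
  by rewrite RfE; apply: normC_half_rect.
split=> [[_ normRf] | [pm4 _]].
  have sq4 w w_range := (sq4_iff w).1 (normRf w w_range).
  split=> [x lt_x x_neq0 x_neq2m | ]; first by rewrite ReE intr_double_mem; apply: (pm2_iff.2 sq4).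
  rewrite -(card_eq0 sq4); apply: eq_card => x; rewrite !inE ReE intr_eq0 mulf_eq0 //.
split=> [k _ | w w_range]; first by rewrite /fseq (arrE 0%N) (arrE 1%N); apply: qmix_quaternary.
apply/sq4_iff; apply: (pm2_iff.1 _ w w_range) => x lt_x x_neq0 x_neq2m.
by rewrite -intr_double_mem -ReE; apply: pm4.
Qed.
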